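(* Let $\mathcal{T}=(\mathbb{K}_i,\phi_i)_{i=0,\dots,m}$ be a tower with $\mathbb{K}_0=\emptyset$ whose maps are elementary inclusions or elementary contractions (named according to the naming convention below), let $\Delta$ be its dimension, $n$ its number of elementary inclusions, $n_0$ the number of vertex inclusions, and let $\hat{\mathbb{K}}_m$ be the last complex of the active small coning construction. Then $|\hat{\mathbb{K}}_m|\le n+2\cdot(\Delta+1)\cdot n\cdot(1+\log_2 n_0)=O(n\cdot\Delta\cdot\log_2 n_0)$.
   Context: Simplicial complexes are finite abstract simplicial complexes; the dimension of a tower is the maximal dimension of a simplex in any $\mathbb{K}_i$. $\phi_i$ is an elementary inclusion if $\mathbb{K}_{i+1}=\mathbb{K}_i\cup\{\sigma\}$ with $\sigma\notin\mathbb{K}_i$ and $\phi_i$ the inclusion (a vertex inclusion if $\sigma$ is a vertex); it is an elementary contraction of distinct vertices $u,v\in\mathbb{K}_i$ if for one of them, say $v$, the vertex set of $\mathbb{K}_{i+1}$ is that of $\mathbb{K}_i$ minus $v$, $\phi_i(u)=\phi_i(v)=u$, $\phi_i$ is the identity on other vertices, and $\mathbb{K}_{i+1}=\phi_i(\mathbb{K}_i)$. Active small coning construction: $\hat{\mathbb{K}}_0=\emptyset$; vertices of $\hat{\mathbb{K}}_i$ are flagged active/inactive; a simplex is active if all its vertices are. $\mathrm{Act}\overline{\mathrm{St}}(w,\hat{\mathbb{K}}_i)$ is the set of active simplices of $\hat{\mathbb{K}}_i$ in the closed star of $w$ (all faces of simplices containing $w$); $w\ast S=\{\{w\}\cup\tau:\tau\in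 S\}$. On an elementary inclusion of $\sigma$: $\hat{\mathbb{K}}_{i+1}=\hat{\mathbb{K}}_i\cup\{\sigma\}$, a new vertex being marked active. On an elementary contraction of $u,v$: if $|\mathrm{Act}\overline{\mathrm{St}}(u,\hat{\mathbb{K}}_i)|\le|\mathrm{Act}\overline{\mathrm{St}}(v,\hat{\mathbb{K}}_i)|$, set $\hat{\mathbb{K}}_{i+1}=\hat{\mathbb{K}}_i\cup(v\ast\mathrm{Act}\overline{\mathrm{St}}(u,\hat{\mathbb{K}}_i))$ and mark $u$ inactive; otherwise the same with $u,v$ swapped. Naming convention: each contraction maps $u,v$ to the one not marked inactive. *)

From HB Require Import structures.
From mathcomp Require Import all_boot.
From mathcomp Require Import finmap.

Set Implicit Arguments.
Unset Strict Implicit.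
Unset Printing Implicit Defensive.

Local Open Scope fset_scope.

Definition simplex := {fset nat}.
Definition complex := {fset {fset nat}}.

Definition is_complex (K : complex) : Prop :=
  forall s, s \in K -> s != fset0 /\
    (forall t : {fset nat}, t != fset0 -> t `<=` s -> t \in K).

Definition is_vertex (K : complex) (x : nat) : bool :=
  has (fun s : {fset nat} => x \in s) K.

(* An elementary map of a tower:
   - Incl s     : elementary inclusion of the simplex s;
   - Contr u v  : elementary contraction of the distinct vertices u, v,
                  where v is removed and phi(u) = phi(v) = u. *)
Inductive step := Incl of {fset nat} | Contr of nat & nat.

Definition contr_map (u v : nat) (x : nat) : nat := if x == v then u else x.

Definition apply_step (K : complex) (st : step) : complex :=
  match st with
  | Incl s => s |` K
  | Contr u v => [fset [fset contr_map u v x | x in s] | s : {fset nat} in K]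
  end.

Definition valid_step (K : complex) (st : step) : Prop :=
  match st with
  | Incl s => s \notin K
  | Contr u v => [/\ u != v, is_vertex K u & is_vertex K v]
  end.

Definition towerK (ts : seq step) (i : nat) : complex :=
  foldl apply_step fset0 (take i ts).

Definition is_vertex_incl (st : step) : bool :=
  if st is Incl s then #|` s| == 1 else false.

Definition is_incl (st : step) : bool := if st is Incl _ then true else false.

Definition n_incl (ts : seq step) : nat := count is_incl ts.
Definition n_vertex_incl (ts : seq step) : nat := count is_vertex_incl ts.

Definition cdim (K : complex) : nat := \max_(s <- K) (#|` s| - 1).
Definition tower_dim (ts : seq step) : nat :=
  \max_(i < (size ts).+1) cdim (towerK ts i).

(* state = (hat K_i, set of active vertices of hat K_i) *)
Definition cstate := (complex * {fset nat})%type.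

Definition active (act : {fset nat}) (s : {fset nat}) : bool := s `<=` act.

Definition act_star (w : nat) (st : cstate) : complex :=
  [fset s in st.1 | active st.2 s &&
     has (fun t : {fset nat} => (w \in t) && (s `<=` t)) st.1].

Definition cone (w : nat) (S : complex) : complex := [fset w |` s | s : {fset nat} in S].

(* For the contraction Contr u v (v removed,
   mapped to u), by the naming convention v is the vertex marked inactive,
   i.e. the vertex whose active closed star is not larger (see hypothesis
   [naming_convention]); the construction adds u * ActSt(v) and marks v
   inactive. *)
Definition coning_step (st : cstate) (x : step) : cstate :=
  match x with
  | Incl s => (s |` st.1, if #|` s| == 1 then st.2 `|` s else st.2)
  | Contr u v => (st.1 `|` cone u (act_star v st), st.2 `\ v)
  end.

Definition coning (ts : seq step) (i : nat) : cstate :=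
  foldl coning_step (fset0, fset0) (take i ts).

Definition naming_convention (ts : seq step) : Prop :=
  forall i u v, i < size ts -> nth (Incl fset0) ts i = Contr u v ->
    #|` act_star v (coning ts i)| <= #|` act_star u (coning ts i)|.

Definition valid_tower (ts : seq step) : Prop :=
  (forall i, i <= size ts -> is_complex (towerK ts i)) /\
  (forall i, i < size ts -> valid_step (towerK ts i) (nth (Incl fset0) ts i)) /\
  (forall i x, i < size ts -> nth (Incl fset0) ts i = Incl [fset x] ->
     forall j, j <= i -> ~~ is_vertex (towerK ts j) x).

(* Amortized analysis with a potential.  Every vertex inserted by a vertex
   inclusion is followed along the contractions to the vertex it has been
   merged into; the class of a vertex x of K_i is the set of inserted vertices
   merged into x, and its weight is log n0 - log |class(x)| (floored logs).
   The potential Phi_i sums deg(x) * weight(x), where deg(x) counts the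
   simplices of K_i through x.  Including a simplex s adds one simplex to
   hatK and raises Phi by at most |s| log n0 <= (dim + 1) log n0.  Contracting
   v into u adds |ActSt(v)| <= 2 min(deg u, deg v) simplices, since an active
   face of a simplex through a vertex w is a simplex of K_i through w, possibly
   with w removed, and the naming convention makes ActSt(v) the smaller star;
   meanwhile the merged class is at least twice the smaller one, so Phi drops
   by at least min(deg u, deg v).  Hence |hatK_i| + 2 Phi_i stays below
   (number of inclusions) * (1 + 2 (dim + 1) log n0). *)

From mathcomp Require Import all_boot finmap zify.
From Stdlib Require Import Reals Lra.

Set Implicit Arguments.
Unset Strict Implicit.
Unset Printing Implicit Defensive.

Local Open Scope fset_scope.
Local Open Scope nat_scope.

Lemma foldl_take_nth (T S : Type) (f : T -> S -> T) (x0 : T) (d : S) (s : seq S) i :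
  i < size s -> foldl f x0 (take i.+1 s) = f (foldl f x0 (take i s)) (nth d s i).
Proof. by move=> lt_i; rewrite (take_nth d lt_i) -cats1 foldl_cat. Qed.

Lemma is_vertexP (K : complex) x :
  reflect (exists2 s, s \in K & x \in s) (is_vertex K x).
Proof. exact: hasP. Qed.

Lemma act_starP w (st : cstate) r :
  reflect [/\ r \in st.1, r `<=` st.2 & exists2 t, t \in st.1 & (w \in t) && (r `<=` t)]
          (r \in act_star w st).
Proof. by rewrite /act_star inE; apply: (iffP and3P) => -[? ? /hasP]. Qed.

Lemma contr_map_neq u v x : u != v -> contr_map u v x != v.
Proof. by move=> uv; rewrite /contr_map; case: ifP => [_|/negbT]. Qed.

Lemma contr_map_notin u v (s : {fset nat}) :
  v \notin s -> [fset contr_map u v x | x in s] = s.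
Proof.
have id_s x : x \in s -> v \notin s -> contr_map u v x = x.
  by move=> xs vs; rewrite /contr_map; case: eqP => // xv; rewrite -xv xs in vs.
move=> vs; apply/fsetP => y; apply/imfsetP/idP => [[x xs ->]|ys]; first by rewrite id_s.
by exists y; rewrite ?id_s.
Qed.

Lemma apply_contr_notin (K : complex) u v s : s \in K -> v \notin s ->
  s \in apply_step K (Contr u v).
Proof. by move=> sK vs; apply/imfsetP; exists s; rewrite ?contr_map_notin. Qed.

Lemma contr_map_swap u v (s : {fset nat}) : v \notin s -> u \in s ->
  [fset contr_map u v x | x in v |` (s `\ u)] = s.
Proof.
move=> vs us; apply/fsetP => z; apply/imfsetP/idP => [[x /= + ->]|zs].
  rewrite in_fset1U in_fsetD1 /contr_map => /orP [/eqP->|/andP [_ xs]]; first by rewrite eqxx.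
  by case: eqP => // xv; rewrite -xv xs in vs.
have [->|zu] := eqVneq z u; first by exists v; rewrite ?fsetU11 // /contr_map eqxx.
exists z; first by rewrite /= in_fset1U in_fsetD1 zu zs orbT.
by rewrite /contr_map; case: eqP => // zv; rewrite -zv zs in vs.
Qed.

Lemma vertex_of_incl_nonsingleton (K : complex) (sg : {fset nat}) x :
  is_complex (sg |` K) -> x \in sg -> #|` sg| != 1 -> is_vertex K x.
Proof.
move=> cK xs c1; have [_ sg_faces] := cK sg (fsetU11 _ _).
have : [fset x] \in sg |` K.
  apply: sg_faces; last by rewrite fsub1set.
  by apply/fset0Pn; exists x; rewrite in_fset1.
rewrite in_fset1U => /orP [/eqP xe|xK]; first by rewrite -xe cardfs1 in c1.
by apply/is_vertexP; exists [fset x] => //; rewrite in_fset1.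
Qed.

Lemma card_le_cdim (K : complex) s : s \in K -> #|` s| <= cdim K + 1.
Proof.
move=> sK; suff : #|` s| - 1 <= cdim K by lia.
exact: (@leq_bigmax_seq _ _ xpredT (fun t : {fset nat} => #|` t| - 1) _ sK).
Qed.

Lemma cdim_le_tower_dim ts i : i <= size ts -> cdim (towerK ts i) <= tower_dim ts.
Proof.
move=> le_i; rewrite -ltnS in le_i.
exact: (@leq_bigmax _ (fun j : 'I_(size ts).+1 => cdim (towerK ts j)) (Ordinal le_i)).
Qed.

Definition incl_vertices (st : step) : {fset nat} :=
  if st is Incl s then (if #|` s| == 1 then s else fset0) else fset0.

Definition new_vertices (l : seq step) : {fset nat} := \bigcup_(st <- l) incl_vertices st.

Lemma card_new_vertices l : #|` new_vertices l| <= count is_vertex_incl l.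
Proof.
elim: l => [|st l IH]; first by rewrite /new_vertices big_nil cardfs0.
rewrite /new_vertices big_cons; apply: leq_trans (leq_card_fsetU _ _) _.
by apply: leq_add IH; case: st => [s|//] /=; case: eqP => [->|]; rewrite ?cardfs0.
Qed.

Definition rep_step (M : nat -> nat) (st : step) : nat -> nat :=
  if st is Contr u v then contr_map u v \o M else M.

Lemma ltn_trunc_log2_minn_add a b : 0 < a -> 0 < b ->
  trunc_log 2 (minn a b) < trunc_log 2 (a + b).
Proof.
move=> a0 b0; apply: trunc_log_max => //; rewrite expnS mul2n -addnn.
have m0 : 0 < minn a b by rewrite leq_min a0 b0.
apply: leq_trans (leq_add (trunc_logP _ m0) (trunc_logP _ m0)) _ => //.
by apply: leq_add; rewrite geq_min leqnn ?orbT.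
Qed.

Lemma merge_weight_le (L a b du dv du' : nat) : 0 < a -> 0 < b ->
  trunc_log 2 (a + b) <= L -> du' <= du + dv ->
  du' * (L - trunc_log 2 (a + b)) + minn du dv <=
    du * (L - trunc_log 2 a) + dv * (L - trunc_log 2 b).
Proof.
move=> a0 b0 le_L le_du.
have ta := leq_trunc_log 2 (leq_addr b a); have tb := leq_trunc_log 2 (leq_addl a b).
have tm := ltn_trunc_log2_minn_add a0 b0.
by case: (leqP a b) => ab; [rewrite (minn_idPl ab) in tm | rewrite (minn_idPr (ltnW ab)) in tm]; nia.
Qed.

Lemma count_mem_fset_le (T : choiceType) (A B : {fset T}) : count (mem B) A <= #|` B|.
Proof.
rewrite -size_filter; apply: uniq_leq_size; first by rewrite filter_uniq.
by move=> x; rewrite mem_filter => /andP [].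
Qed.

Section Tower.

Variable ts : seq step.

Local Notation K := (towerK ts).
Local Notation hatK i := (coning ts i).1.
Local Notation act i := (coning ts i).2.
Local Notation step_at i := (nth (Incl fset0) ts i).

Hypothesis K_complex : forall i, i <= size ts -> is_complex (K i).
Hypothesis step_valid : forall i, i < size ts -> valid_step (K i) (step_at i).
Hypothesis vertex_incl_fresh : forall i x, i < size ts -> step_at i = Incl [fset x] ->
  forall j, j <= i -> ~~ is_vertex (K j) x.

Lemma towerK0 : K 0 = fset0.
Proof. by rewrite /towerK take0. Qed.

Lemma towerKS i : i < size ts -> K i.+1 = apply_step (K i) (step_at i).
Proof. exact: foldl_take_nth. Qed.

Lemma coning0 : coning ts 0 = (fset0, fset0).
Proof. by rewrite /coning take0. Qed.

Lemma coningS i : i < size ts -> coning ts i.+1 = coning_step (coning ts i) (step_at i).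
Proof. exact: foldl_take_nth. Qed.

Definition seen i x := exists2 j, j <= i & is_vertex (K j) x.

Lemma seenS i x : seen i x -> seen i.+1 x.
Proof. by case=> j le_ji xj; exists j => //; apply: leqW. Qed.

Lemma seen_vertex i x : is_vertex (K i) x -> seen i x.
Proof. by exists i. Qed.

Lemma unseen_vertex_incl i x : i < size ts -> step_at i = Incl [fset x] -> ~ seen i x.
Proof. by move=> lt_i E [j le_ji]; apply/negP; exact: vertex_incl_fresh lt_i E j le_ji. Qed.

Lemma tower_vertex_active i x : i <= size ts -> is_vertex (K i) x -> x \in act i.
Proof.
elim: i x => [|i IH] x le_i; first by rewrite towerK0 => /is_vertexP [s]; rewrite in_fset0.
have cK := K_complex le_i; have vi := step_valid le_i.
rewrite coningS // towerKS // in cK *; case E: (step_at i) cK vi => [sg|u v] /= cK vi.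
- case/is_vertexP => s; rewrite in_fset1U => /orP [/eqP->{s} xs|sK xs].
    have [sg1|sgn1] := eqVneq #|` sg| 1; first by rewrite in_fsetU xs orbT.
    exact: IH (ltnW le_i) (vertex_of_incl_nonsingleton cK xs sgn1).
  by case: ifP => _; rewrite ?in_fsetU IH ?(ltnW le_i) //; apply/is_vertexP; exists s.
- case: vi => uv Ku Kv.
  move=> /is_vertexP [_ /imfsetP [s /= sK ->] /imfsetP [y /= ys ->]].
  rewrite in_fsetD1 contr_map_neq //= /contr_map; case: ifP => _; first exact: IH (ltnW le_i) Ku.
  by apply: IH (ltnW le_i) _; apply/is_vertexP; exists s.
Qed.

Lemma coning_vertex_seen i t x : i <= size ts -> t \in hatK i -> x \in t -> seen i x.
Proof.
elim: i t x => [|i IH] t x le_i; first by rewrite coning0 in_fset0.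
have vi := step_valid le_i; rewrite coningS //.
have IHi t' x' : t' \in hatK i -> x' \in t' -> seen i.+1 x'.
  by move=> tH xt; apply: seenS; apply: IH tH xt; apply: ltnW.
case E: (step_at i) vi => [sg|u v] /= vi; rewrite in_fsetU => /orP [tH|tH] xt.
- move: tH; rewrite in_fset1 => /eqP tsg; exists i.+1 => //.
  by rewrite towerKS // E /=; apply/is_vertexP; exists sg; rewrite -?tsg ?fsetU11.
- exact: IHi tH xt.
- exact: IHi tH xt.
- case/imfsetP: tH xt => r /= /act_starP [rH _ _] ->; rewrite in_fset1U => /orP [/eqP->|xr].
    by case: vi => _ Ku _; apply/seenS/seen_vertex.
  exact: IHi rH xr.
Qed.

Lemma coning_nonempty i : i <= size ts -> fset0 \notin hatK i.
Proof.
elim: i => [|i IH] le_i; first by rewrite coning0 in_fset0.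
have cK := K_complex le_i; rewrite towerKS // in cK.
rewrite coningS //; case: (step_at i) cK => [sg|u v] /= cK;
  rewrite in_fsetU negb_or IH ?(ltnW le_i) ?andbT //=.
  by have [sg0 _] := cK sg (fsetU11 _ _); rewrite in_fset1 eq_sym.
by apply/imfsetP => -[r _ /fsetP /(_ u)]; rewrite fsetU11 in_fset0.
Qed.

Lemma active_face_in_tower i t s : i <= size ts ->
  t \in hatK i -> s `<=` t -> s `<=` act i -> s != fset0 -> s \in K i.
Proof.
elim: i t s => [|i IH] t s le_i; first by rewrite coning0 in_fset0.
have cK := K_complex le_i; have vi := step_valid le_i.
have IHi := IH _ _ (ltnW le_i).
rewrite towerKS // in cK *; rewrite coningS //.
case E: (step_at i) cK vi => [sg|u v] /= cK vi.
- rewrite in_fset1U => /orP [/eqP-> s_sg _ s0|tH st sA s0].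
    by have [_ faces] := cK sg (fsetU11 _ _); apply: faces.
  rewrite in_fset1U (IHi t) ?orbT //; case: ifP sA => [/cardfs1P [y sgy] sA|_ //].
  (* the vertex activated by a vertex inclusion is fresh, so it is not in [t] *)
  apply/fsubsetP => z zs; move: (fsubsetP sA z zs); rewrite sgy in_fsetU in_fset1.
  case/orP => [//|/eqP zy]; rewrite sgy zy in E zs; case: (unseen_vertex_incl le_i E).
  exact: coning_vertex_seen (ltnW le_i) tH (fsubsetP st _ zs).
- case: vi => uv Ku Kv; have vA := tower_vertex_active (ltnW le_i) Kv.
  move=> + + /fsubsetD1P [sA vs] s0; rewrite in_fsetU => /orP [tH st|].
    by apply: apply_contr_notin vs; apply: IHi tH st sA s0.
  case/imfsetP => r /= /act_starP [_ _ [t0 t0H /andP [vt0 rt0]]] -> st.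
  have [us|us] := boolP (u \in s); last first.
    apply: apply_contr_notin vs; apply: IHi t0H _ sA s0; apply: fsubset_trans rt0.
    by rewrite -(mem_fsetD1 us) fsubDset.
  have sur : s `\ u `<=` r by rewrite fsubDset.
  rewrite -(contr_map_swap vs us); apply: in_imfset; apply: IHi t0H _ _ _.
  + by rewrite fsubUset fsub1set vt0 (fsubset_trans sur rt0).
  + by rewrite fsubUset fsub1set vA (fsubset_trans (fsubD1set s u) sA).
  + by apply/fset0Pn; exists v; rewrite fsetU11.
Qed.

Definition star i x := [fset s in K i | x \in s].
Definition deg i x := #|` star i x|.

Lemma in_star i x s : (s \in star i x) = (s \in K i) && (x \in s).
Proof. by rewrite inE. Qed.

Lemma card_act_star_le i x : i <= size ts -> is_vertex (K i) x ->
  #|` act_star x (coning ts i)| <= 2 * deg i x.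
Proof.
move=> le_i Kx; have xA := tower_vertex_active le_i Kx.
(* an active face of a simplex through [x] is in [K i], and so is its union with [x] *)
have sub : act_star x (coning ts i) `<=` star i x `|` [fset s `\ x | s in star i x].
  apply/fsubsetP => s /act_starP [sH sA [t tH /andP [xt st]]].
  have s0 : s != fset0 by apply: contraNneq (coning_nonempty le_i) => <-.
  have sK := active_face_in_tower le_i sH (fsubset_refl s) sA s0.
  rewrite in_fsetU in_star sK /=; case xs: (x \in s) => //=.
  apply/imfsetP; exists (x |` s); last by rewrite fsetU1K ?xs.
  rewrite /= in_star fsetU11 andbT; apply: active_face_in_tower le_i tH _ _ _.
  - by rewrite fsubUset fsub1set xt st.
  - by rewrite fsubUset fsub1set xA sA.
  - by apply/fset0Pn; exists x; rewrite fsetU11.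
apply: leq_trans (fsubset_leq_card sub) _; apply: leq_trans (leq_card_fsetU _ _) _.
by rewrite mul2n -addnn leq_add // leq_imfset_card.
Qed.

Definition rep i := foldl rep_step (@id nat) (take i ts).
Definition inserted i := new_vertices (take i ts).
Definition vclass i x := [fset y in inserted i | rep i y == x].
Definition class_size i x := #|` vclass i x|.

Lemma repS i : i < size ts -> rep i.+1 = rep_step (rep i) (step_at i).
Proof. exact: foldl_take_nth. Qed.

Lemma insertedS i : i < size ts -> inserted i.+1 = inserted i `|` incl_vertices (step_at i).
Proof.
by move=> lt_i; rewrite /inserted /new_vertices (take_nth (Incl fset0) lt_i) -cats1 big_cat big_seq1.
Qed.

Lemma in_vclass i x y : (y \in vclass i x) = (y \in inserted i) && (rep i y == x).
Proof. by rewrite inE. Qed.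

Lemma class_size_le i x : class_size i x <= n_vertex_incl ts.
Proof.
apply: leq_trans (card_new_vertices ts); apply/fsubset_leq_card/fsubsetP => y.
rewrite in_vclass => /andP [+ _]; rewrite /inserted /new_vertices.
by rewrite -{2}(cat_take_drop i ts) big_cat in_fsetU => ->.
Qed.

Lemma vclass_disjoint i u v : u != v -> vclass i u `&` vclass i v = fset0.
Proof.
move=> uv; apply/fsetP => y; rewrite in_fsetI !in_vclass in_fset0.
by case: (rep i y =P u) => [->|]; rewrite ?(negbTE uv) !andbF.
Qed.

Lemma rep_moved_seen i y : i <= size ts -> rep i y != y -> seen i y.
Proof.
elim: i => [|i IH] le_i; first by rewrite /rep take0 eqxx.
rewrite repS //; have vi := step_valid le_i.
have IHi := IH (ltnW le_i).
case: (step_at i) vi => [sg|u v] /= vi; first by move/IHi/seenS.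
have [/eqP My|/IHi/seenS //] := boolP (rep i y == y).
rewrite My /contr_map; case: (y =P v) => [-> _|_]; last by rewrite eqxx.
by case: vi => _ _ Kv; apply/seenS/seen_vertex.
Qed.

Lemma vertex_in_vclass i x : i <= size ts -> is_vertex (K i) x -> x \in vclass i x.
Proof.
elim: i x => [|i IH] x le_i; first by rewrite towerK0 => /is_vertexP [s]; rewrite in_fset0.
have IHi y : is_vertex (K i) y -> (y \in inserted i) && (rep i y == y).
  by move=> Ky; rewrite -in_vclass; apply: IH (ltnW le_i) Ky.
have cK := K_complex le_i; have vi := step_valid le_i.
rewrite towerKS // in cK *; rewrite in_vclass insertedS // repS // in_fsetU.
case E: (step_at i) cK vi => [sg|u v] /= cK vi.
- case/is_vertexP => s; rewrite in_fset1U => /orP [/eqP->{s} xs|sK xs]; last first.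
    have Kx : is_vertex (K i) x by apply/is_vertexP; exists s.
    by case/andP: (IHi x Kx) => -> ->.
  have [sg1|sgn1] := eqVneq #|` sg| 1; last first.
    by case/andP: (IHi x (vertex_of_incl_nonsingleton cK xs sgn1)) => -> ->.
  rewrite xs orbT /=; apply: contraT => Mx.
  move/eqP/cardfs1P: sg1 => [y sgy]; move: xs; rewrite sgy in_fset1 => /eqP xy.
  rewrite sgy -xy in E.
  by case: (unseen_vertex_incl le_i E); apply: rep_moved_seen (ltnW le_i) Mx.
- case: vi => uv Ku Kv; rewrite in_fset0 orbF.
  move=> /is_vertexP [_ /imfsetP [s /= sK ->] /imfsetP [y /= ys ->]].
  have Ky : is_vertex (K i) y by apply/is_vertexP; exists s.
  rewrite /contr_map; case: (y =P v) => [_|/eqP yv].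
    by case/andP: (IHi u Ku) => -> /eqP ->; rewrite if_same eqxx.
  by case/andP: (IHi y Ky) => yY /eqP My; rewrite yY My (negbTE yv) eqxx.
Qed.

Lemma vclass_incl_sub i sg x : i < size ts -> step_at i = Incl sg ->
  vclass i x `<=` vclass i.+1 x.
Proof.
move=> lt_i E; apply/fsubsetP => y; rewrite !in_vclass insertedS // repS // E in_fsetU.
by case/andP => -> ->.
Qed.

Lemma vclass_contr_sub i u v x : i < size ts -> step_at i = Contr u v -> x != v ->
  vclass i x `<=` vclass i.+1 x.
Proof.
move=> lt_i E xv; apply/fsubsetP => y; rewrite !in_vclass insertedS // repS // E in_fsetU.
by case/andP => -> /eqP My; rewrite /= /contr_map My (negbTE xv).
Qed.

Lemma vclass_contr_u i u v : i < size ts -> step_at i = Contr u v ->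
  vclass i.+1 u = vclass i u `|` vclass i v.
Proof.
move=> lt_i E; apply/fsetP => y.
rewrite in_fsetU !in_vclass insertedS // repS // E in_fsetU in_fset0 orbF -andb_orr /=.
by rewrite /contr_map; case: (rep i y =P v) => [->|_]; rewrite ?eqxx ?orbT ?orbF.
Qed.

Definition logn0 := trunc_log 2 (n_vertex_incl ts).
Definition weight i x := logn0 - trunc_log 2 (class_size i x).

Lemma weight_le_sub i j x : vclass i x `<=` vclass j x -> weight j x <= weight i x.
Proof. by move=> sub; apply/leq_sub2l/leq_trunc_log/fsubset_leq_card. Qed.

Lemma deg0 x : deg 0 x = 0.
Proof.
by apply/eqP; rewrite cardfs_eq0; apply/eqP/fsetP => s; rewrite in_star towerK0 in_fset0.
Qed.

Lemma deg_incl i sg x : i < size ts -> step_at i = Incl sg ->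
  deg i.+1 x = (x \in sg) + deg i x.
Proof.
move=> lt_i E; have := step_valid lt_i; rewrite E /deg /= => sgK.
have -> : star i.+1 x = if x \in sg then sg |` star i x else star i x.
  apply/fsetP => s; rewrite in_star towerKS // E /= in_fset1U andb_orl.
  by case: ifP => xsg; rewrite ?in_fset1U in_star; case: eqP => // ->; rewrite xsg.
by case: ifP => _ //; rewrite cardfsU1 in_star (negbTE sgK).
Qed.

Lemma deg_contr_le i u v x : i < size ts -> step_at i = Contr u v ->
  deg i.+1 x <= deg i x + (x == u) * deg i v.
Proof.
move=> lt_i E; rewrite /deg.
set S := star i x `|` (if x == u then star i v else fset0).
have sub : star i.+1 x `<=` [fset [fset contr_map u v y | y in s] | s : {fset nat} in S].
  apply/fsubsetP => s'; rewrite in_star towerKS // E.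
  case/andP => /imfsetP [s /= sK ->] /imfsetP [y /= ys xy]; subst x.
  apply/imfsetP; exists s => //=; rewrite in_fsetU !in_star sK /=.
  by rewrite /contr_map; case: (y =P v) => [<-|_]; rewrite ?eqxx ?in_star ?sK ?ys ?orbT.
apply: leq_trans (fsubset_leq_card sub) _; apply: leq_trans (leq_imfset_card _ _ _) _.
apply: leq_trans (leq_card_fsetU _ _) _.
by rewrite leq_add2l; case: eqP; rewrite ?cardfs0 ?mul1n.
Qed.

Lemma deg_contr_v i u v : i < size ts -> step_at i = Contr u v -> u != v -> deg i.+1 v = 0.
Proof.
move=> lt_i E uv; apply/eqP; rewrite cardfs_eq0; apply/eqP/fsetP => s'.
rewrite in_star in_fset0 towerKS // E; apply/negP.
by case/andP => /imfsetP [s _ ->] /imfsetP [y _ /eqP]; rewrite eq_sym (negbTE (contr_map_neq y uv)).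
Qed.

Definition vertices_ever : {fset nat} :=
  \bigcup_(i <- iota 0 (size ts).+1) \bigcup_(s <- K i) s.

Lemma vertex_in_vertices_ever i x : i <= size ts -> is_vertex (K i) x -> x \in vertices_ever.
Proof.
move=> le_i /is_vertexP [s sK xs]; apply/bigfcupP; exists i.
  by rewrite mem_iota add0n ltnS le_i.
by apply/bigfcupP; exists s; rewrite ?sK.
Qed.

Definition potential i := \sum_(x <- vertices_ever) deg i x * weight i x.

Lemma potential0 : potential 0 = 0.
Proof. by rewrite /potential big1_seq // => x _; rewrite deg0. Qed.

Lemma potential_incl i sg : i < size ts -> step_at i = Incl sg ->
  potential i.+1 <= potential i + #|` sg| * logn0.
Proof.
move=> lt_i E.
have term x : deg i.+1 x * weight i.+1 x <= deg i x * weight i x + (x \in sg) * logn0.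
  rewrite (deg_incl x lt_i E) mulnDl addnC leq_add ?leq_mul ?leq_subr //.
  exact: weight_le_sub (vclass_incl_sub x lt_i E).
rewrite /potential; apply: leq_trans (leq_sum _ (fun x _ => term x)) _.
rewrite big_split /= leq_add2l -big_distrl /= leq_mul2r; apply/orP; right.
apply: leq_trans (count_mem_fset_le vertices_ever sg).
rewrite -sum1_count [leqRHS]big_mkcond /=.
by apply: leq_sum => x _; case: (x \in sg).
Qed.

Lemma class_size_gt0 i x : i <= size ts -> is_vertex (K i) x -> 0 < class_size i x.
Proof. by move=> le_i Kx; rewrite cardfs_gt0; apply/fset0Pn; exists x; apply: vertex_in_vclass. Qed.

Lemma class_size_contr_u i u v : i < size ts -> step_at i = Contr u v -> u != v ->
  class_size i.+1 u = class_size i u + class_size i v.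
Proof.
move=> lt_i E uv.
by rewrite /class_size (vclass_contr_u lt_i E) -cardfsUI vclass_disjoint // cardfs0 addn0.
Qed.

Lemma potential_contr i u v : i < size ts -> step_at i = Contr u v ->
  potential i.+1 + minn (deg i u) (deg i v) <= potential i.
Proof.
move=> lt_i E; have := step_valid lt_i; rewrite E => -[uv Ku Kv].
have uU := vertex_in_vertices_ever (ltnW lt_i) Ku.
have vU : v \in vertices_ever `\ u.
  by rewrite in_fsetD1 eq_sym uv (vertex_in_vertices_ever (ltnW lt_i) Kv).
rewrite /potential !(big_fsetD1 _ uU) !(big_fsetD1 _ vU) /= (deg_contr_v lt_i E uv) mul0n add0n.
set U := vertices_ever `\ u `\ v.
have others : \sum_(x <- U) deg i.+1 x * weight i.+1 x <= \sum_(x <- U) deg i x * weight i x.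
  rewrite big_seq [leqRHS]big_seq; apply: leq_sum => x; rewrite !in_fsetD1 => /and3P [xv xu _].
  apply: leq_mul; first by have := deg_contr_le x lt_i E; rewrite (negbTE xu) addn0.
  exact: weight_le_sub (vclass_contr_sub lt_i E xv).
have merged : deg i.+1 u * weight i.+1 u + minn (deg i u) (deg i v) <=
              deg i u * weight i u + deg i v * weight i v.
  rewrite /weight (class_size_contr_u lt_i E uv); apply: merge_weight_le.
  - exact: class_size_gt0 (ltnW lt_i) Ku.
  - exact: class_size_gt0 (ltnW lt_i) Kv.
  - by rewrite -(class_size_contr_u lt_i E uv); apply/leq_trunc_log/class_size_le.
  - by have := deg_contr_le u lt_i E; rewrite eqxx mul1n.
by move: others merged; set a := \sum_(_ <- _) _; set b := \sum_(_ <- _) _; lia.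
Qed.

Lemma card_coning_potential_le i : naming_convention ts -> i <= size ts ->
  #|` hatK i| + 2 * potential i <=
    count is_incl (take i ts) * (1 + 2 * (tower_dim ts + 1) * logn0).
Proof.
move=> naming; elim: i => [|i IH] le_i; first by rewrite potential0 coning0 take0 cardfs0.
have {}IH := IH (ltnW le_i).
rewrite (take_nth (Incl fset0) le_i) -cats1 count_cat /= addn0 coningS //.
have := step_valid le_i; have := naming i; case E: (step_at i) => [sg|u v] /= named vi.
- have incl := potential_incl le_i E.
  have sg_dim : #|` sg| <= tower_dim ts + 1.
    have sgK : sg \in K i.+1 by rewrite towerKS // E fsetU11.
    by apply: leq_trans (card_le_cdim sgK) _; rewrite leq_add2r cdim_le_tower_dim.
  have card1 : #|` sg |` hatK i| <= #|` hatK i| + 1.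
    by rewrite cardfsU1 addnC leq_add2l leq_b1.
  move: IH incl card1 (leq_mul sg_dim (leqnn logn0)).
  set a := #|` _ |` _|; set b := #|` hatK i|; set c := count _ _; set d := tower_dim ts + 1.
  by nia.
- case: vi => uv Ku Kv; have contr := potential_contr le_i E.
  have star_u := card_act_star_le (ltnW le_i) Ku.
  have star_v := card_act_star_le (ltnW le_i) Kv.
  have named_uv := named u v le_i erefl.
  have card_cone : #|` hatK i `|` cone u (act_star v (coning ts i))| <=
                   #|` hatK i| + #|` act_star v (coning ts i)|.
    by apply: leq_trans (leq_card_fsetU _ _) _; rewrite leq_add2l leq_imfset_card.
  move: IH contr star_u star_v named_uv card_cone.
  set a := #|` _ `|` _|; set b := #|` hatK i|; set c := count _ _.
  set su := #|` act_star u _|; set sv := #|` act_star v _|.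
  by lia.
Qed.

End Tower.

Lemma INR_expn2 k : INR (expn 2 k) = (2 ^ k)%R.
Proof. by elim: k => [//|k IH]; rewrite expnS mult_INR IH. Qed.

Lemma trunc_log2_le_ln n : (INR (trunc_log 2 n) <= ln (INR n) / ln 2)%R.
Proof.
(* for [n = 0] both sides vanish, Stdlib's [ln] being [0] on nonpositive reals *)
have ln2_gt0 : (0 < ln 2)%R by rewrite -ln_1; apply: ln_increasing; lra.
have [->|n_gt0] := posnP n.
  rewrite trunc_log0 /ln /=; case: Rlt_dec => [/Rlt_irrefl //|_]; lra.
apply: (Rmult_le_reg_r (ln 2)) => //.
rewrite /Rdiv Rmult_assoc Rinv_l ?Rmult_1_r; last lra.
have pow_le : (2 ^ trunc_log 2 n <= INR n)%R by rewrite -INR_expn2; apply/le_INR/leP/trunc_logP.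
rewrite -ln_pow; last lra.
have [lt|->] := Rle_lt_or_eq_dec _ _ pow_le; last exact: Rle_refl.
by apply/Rlt_le/ln_increasing => //; apply: pow_lt; lra.
Qed.

Theorem proposition12 (ts : seq step) :
  valid_tower ts -> naming_convention ts ->
  (INR #|` (coning ts (size ts)).1| <=
     INR (n_incl ts)
     + 2 * INR (tower_dim ts + 1) * INR (n_incl ts)
         * (1 + ln (INR (n_vertex_incl ts)) / ln 2))%R.
Proof.
move=> [K_complex [step_valid fresh]] naming.
have := card_coning_potential_le K_complex step_valid fresh naming (leqnn (size ts)).
rewrite take_size => /(leq_trans (leq_addr _ _)) /leP /le_INR.
rewrite mult_INR plus_INR !mult_INR; change (INR 2) with 2%R; change (INR 1) with 1%R.
have := trunc_log2_le_ln (n_vertex_incl ts); rewrite -/(logn0 ts) -/(n_incl ts).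
have := Rmult_le_pos _ _ (pos_INR (tower_dim ts + 1)) (pos_INR (n_incl ts)).
have := pos_INR (n_incl ts).
nra.
Qed.
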